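(* Let $\mathcal N$ be a feedforward ANN consisting of MatMul layers (each a convolution or fully-connected linear map with bias followed by batch normalization) alternating with QCFS activation layers, beginning with a MatMul layer followed by a QCFS layer and ending with a MatMul layer, where the $n$-th QCFS layer has quantization step $L_n$ and threshold $\theta_n$. Let $\mathcal M$ be the PASC formulation of $\mathcal N$ (described in the context). Then $\mathcal M$ and $\mathcal N$ are mathematically equivalent: for every input $z$ and every output class $c\in\mathbf C$, $f^{z}_{\mathcal M}(c)=f^{z}_{\mathcal N}(c)$.
   Context: QCFS activation with quantization step $L$ and threshold $\theta$: $\widehat h(y)=\theta\,\mathrm{clip}\!\left(\frac1L\left\lfloor\frac{yL}{\theta}+\frac12\right\rfloor,0,1\right)$ elementwise, with $\mathrm{clip}(u,0,1)=\min(\max(u,0),1)$. $H(y)=1$ if $y\ge0$, else $0$. A MatMul layer computes $y\mapsto\gamma\frac{y*W+b-\mu}{\sqrt{\sigma^2+\epsilon}}+\beta$. PASC formulation $\mathcal M$ of $\mathcal N$: (i) the first MatMul layer is computed as in $\mathcal N$ on the input, giving $X$; the first QCFS layer (step $L_1$, threshold $\theta_1$) is replaced by: $\theta^*=\theta_1/L_1$, $\mathrm{mem}(0)=\widehat h(X)$, and for $t=1..L_1$, $s(t)=H(\mathrm{mem}(t-1)-\theta^* )\theta^*$, $\mathrm{mem}(t)=\mathrm{mem}(t-1)-s(t)$, producing $L_1$ timesteps. (ii) Every subsequent MatMul layer receiving $L$ timesteps $z_1,\dots,z_L$ outputs, for each $i$, $z_i'=\gamma\frac{z_i*W+b/L-\mu/L}{\sqrt{\sigma^2+\epsilon}}+\beta/L$.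 (iii) Every subsequent QCFS layer with step $L_n$ and threshold $\theta_n$, receiving $L_{n-1}$ timesteps $X[1..L_{n-1}]$, is replaced by the following elementwise procedure: $\theta^*=\theta_n/L_n$, $m=\theta^*/2$, $s=0$; Stage 1: for $t=1..L_{n-1}$: $m\leftarrow m+X[t]$, and if $m\ge\theta^*$ then $s\leftarrow s+\theta^*$, $m\leftarrow m-\theta^*$; Stage 2: for $t=1..\max(L_{n-1},L_n)-1$: if $m\ge\theta^*$ then $s\leftarrow s+\theta^*$, $m\leftarrow m-\theta^*$, else if $m<0$ then $s\leftarrow s-\theta^*$, $m\leftarrow m+\theta^*$; Stage 3: $\mathrm{mem}(0)=s$ and for $t=1..L_n$, output $H(\mathrm{mem}(t-1)-\theta^* )\theta^*$ at timestep $t$ and subtract it from $\mathrm{mem}$. (iv) If the final MatMul layer outputs $L$ timesteps $z_1,\dots,z_L$, the SNN output vector is $z^*=\frac1L\sum_{i=1}^L z_i$. Classification map: for a model with final output vector $v$ (the ANN's final layer output for $\mathcal N$, the vector $z^*$ for $\mathcal M$) on input $z$, $f^z(c)=v[c]/\sum_{c'\in\mathbf C}v[c']$ for each class $c$ in the set $\mathbf C$ of output classes. Two models are mathematically equivalent if their classification maps coincide for every input. *)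

From mathcomp Require Import all_boot all_order all_algebra.
From mathcomp Require Import reals.
Set Implicit Arguments. Unset Strict Implicit. Unset Printing Implicit Defensive.
Import Order.TTheory GRing.Theory Num.Theory.
Local Open Scope ring_scope.

Section PASC.
Variable R : realType.

Definition heav (y : R) : R := if 0 <= y then 1 else 0.

Definition clip01 (u : R) : R := Num.min (Num.max u 0) 1.

Definition qcfs (L : nat) (theta : R) (y : R) : R :=
  theta * clip01 ((Num.floor (y * L%:R / theta + 2^-1))%:~R / L%:R).

Definition qcfs_vec (L : nat) (theta : R) m (y : 'rV[R]_m) : 'rV[R]_m :=
  \row_j qcfs L theta (y 0 j).

(** A MatMul layer: linear map y |-> y *m W (fully connected, or a
    convolution written as its matrix), bias b, batch-norm parameters
    gamma, beta, mu, sigma2 (variance), eps, applied per output feature. *)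
Record matmul (m n : nat) := MatMul {
  mm_W : 'M[R]_(m, n);
  mm_b : 'rV[R]_n;
  mm_gamma : 'rV[R]_n;
  mm_beta : 'rV[R]_n;
  mm_mu : 'rV[R]_n;
  mm_sigma2 : 'rV[R]_n;
  mm_eps : 'rV[R]_n }.

Definition mm_apply m n (M : matmul m n) (y : 'rV[R]_m) : 'rV[R]_n :=
  \row_j (mm_gamma M 0 j * ((y *m mm_W M) 0 j + mm_b M 0 j - mm_mu M 0 j)
            / Num.sqrt (mm_sigma2 M 0 j + mm_eps M 0 j) + mm_beta M 0 j).

Definition mm_step m n (M : matmul m n) (L : nat) (z : 'rV[R]_m) : 'rV[R]_n :=
  \row_j (mm_gamma M 0 j * ((z *m mm_W M) 0 j + mm_b M 0 j / L%:R
                             - mm_mu M 0 j / L%:R)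
            / Num.sqrt (mm_sigma2 M 0 j + mm_eps M 0 j) + mm_beta M 0 j / L%:R).

(** Network body, indexed by the current dimension m, with c output
    classes:  BLast L theta M  = QCFS(L,theta) on dim m then final MatMul M;
              BCons L theta M B = QCFS(L,theta) on dim m, MatMul M : m -> k,
                                  then the rest B. *)
Inductive body (c : nat) : nat -> Type :=
| BLast : forall m, nat -> R -> matmul m c -> body c m
| BCons : forall m k, nat -> R -> matmul m k -> body c k -> body c m.

Inductive net (c d0 : nat) : Type :=
| Net : forall d1, matmul d0 d1 -> body c d1 -> net c d0.

Fixpoint body_wf c m (B : body c m) : Prop :=
  match B with
  | BLast _ L th _ => (0 < L)%N /\ 0 < th
  | BCons _ _ L th _ B' => [/\ (0 < L)%N, 0 < th & body_wf B']
  end.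

Definition net_wf c d0 (N : net c d0) : Prop :=
  match N with Net _ _ B => body_wf B end.

Fixpoint body_eval c m (B : body c m) : 'rV[R]_m -> 'rV[R]_c :=
  match B in body _ m0 return 'rV[R]_m0 -> 'rV[R]_c with
  | BLast _ L th M => fun x => mm_apply M (qcfs_vec L th x)
  | BCons _ _ L th M B' => fun x => body_eval B' (mm_apply M (qcfs_vec L th x))
  end.

Definition ann_eval c d0 (N : net c d0) (z : 'rV[R]_d0) : 'rV[R]_c :=
  match N with Net _ M1 B => body_eval B (mm_apply M1 z) end.

Fixpoint fire (ths mem : R) (L : nat) : seq R :=
  match L with
  | 0 => [::]
  | L'.+1 => let s := heav (mem - ths) * ths in s :: fire ths (mem - s) L'
  end.

Definition pasc_first (L : nat) (th : R) (X : R) : seq R :=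
  fire (th / L%:R) (qcfs L th X) L.

(** Later QCFS layer, scalar version, on the input spike train X
    (of length Lprev = L_{n-1}). State is the pair (m, s). *)
Definition stage1_step (ths : R) (ms : R * R) (x : R) : R * R :=
  let m := ms.1 + x in
  if ths <= m then (m - ths, ms.2 + ths) else (m, ms.2).

Definition stage2_step (ths : R) (ms : R * R) : R * R :=
  let: (m, s) := ms in
  if ths <= m then (m - ths, s + ths)
  else if m < 0 then (m + ths, s - ths) else (m, s).

Definition pasc_later (Lprev L : nat) (th : R) (X : seq R) : seq R :=
  let ths := th / L%:R in
  let ms1 := foldl (stage1_step ths) (ths / 2%:R, 0) X in
  let ms2 := iter (maxn Lprev L).-1 (stage2_step ths) ms1 in
  fire ths ms2.2 L.

Definition lift_vec m (L : nat) (f : 'I_m -> seq R) : seq 'rV[R]_m :=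
  mkseq (fun t => \row_j nth 0 (f j) t) L.

Definition pasc_first_vec m (L : nat) (th : R) (X : 'rV[R]_m) : seq 'rV[R]_m :=
  lift_vec L (fun j => pasc_first L th (X 0 j)).

Definition pasc_later_vec m (Lprev L : nat) (th : R) (X : seq 'rV[R]_m)
  : seq 'rV[R]_m :=
  lift_vec L (fun j => pasc_later Lprev L th [seq (x : 'rV[R]_m) 0 j | x <- X]).

Definition snn_output c (L : nat) (Z : seq 'rV[R]_c) : 'rV[R]_c :=
  (L%:R)^-1 *: \sum_(z <- Z) z.

(** PASC evaluation of the body after the first QCFS layer; Lprev is the
    number of timesteps (step L_{n-1} of the previous QCFS layer). *)
Fixpoint body_pasc c m (Lprev : nat) (B : body c m)
  : seq 'rV[R]_m -> 'rV[R]_c :=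
  match B in body _ m0 return seq 'rV[R]_m0 -> 'rV[R]_c with
  | BLast _ L th M => fun X =>
      snn_output L (map (mm_step M L) (pasc_later_vec Lprev L th X))
  | BCons _ _ L th M B' => fun X =>
      body_pasc L B' (map (mm_step M L) (pasc_later_vec Lprev L th X))
  end.

Definition pasc_eval c d0 (N : net c d0) (z : 'rV[R]_d0) : 'rV[R]_c :=
  match N with
  | Net _ M1 B =>
    let X := mm_apply M1 z in
    match B in body _ m0 return 'rV[R]_m0 -> 'rV[R]_c with
    | BLast _ L th M => fun X =>
        snn_output L (map (mm_step M L) (pasc_first_vec L th X))
    | BCons _ _ L th M B' => fun X =>
        body_pasc L B' (map (mm_step M L) (pasc_first_vec L th X))
    end X
  end.

Definition classif c (v : 'rV[R]_c) (k : 'I_c) : R :=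
  v 0 k / \sum_(k' < c) v 0 k'.

End PASC.

From mathcomp Require Import all_boot all_order all_algebra.
From mathcomp Require Import reals.
From mathcomp Require Import zify ring lra.
Set Implicit Arguments. Unset Strict Implicit. Unset Printing Implicit Defensive.

Import Order.TTheory GRing.Theory Num.Theory.
Local Open Scope ring_scope.

(* Every PASC layer preserves the sum of its signal over the timesteps.  With
   ths = theta / L, a membrane potential j * ths fires clamp(j, 0, L) spikes of
   height ths, while the QCFS activation of y is
   clamp(floor(y / ths + 1/2), 0, L) * ths.
   Stage 1 of a later QCFS layer keeps m + s = ths / 2 + sum x with s = j * ths,
   and stage 2 moves m into [0, ths), making j that floor, unless the clamp
   saturates anyway.  A MatMul layer whose constant terms are divided by L maps
   L timesteps to L timesteps summing to the ANN MatMul of the summed input.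
   Hence the SNN output is 1/L times the ANN output, and the classification map
   is invariant under nonzero scaling. *)

Definition clampz (j : int) (L : nat) : int := Num.max 0 (Num.min j L%:Z).

Lemma clampz_id (j : int) (L : nat) : clampz (clampz j L) L = clampz j L.
Proof. rewrite /clampz; lia. Qed.

Section PASC_sums.
Variable R : realType.

Lemma size_fire (ths mem : R) L : size (fire ths mem L) = L.
Proof. by elim: L mem => [|L IH] mem //=; rewrite IH. Qed.

Lemma sum_fire (ths : R) (j : int) L : 0 < ths ->
  \sum_(s <- fire ths (j%:~R * ths) L) s = (clampz j L)%:~R * ths.
Proof.
move=> ths_gt0; elim: L j => [|L IH] j /=.
  by rewrite big_nil /clampz (_ : Num.max _ _ = 0) ?mul0r //; lia.
have fires : (0 <= j%:~R * ths - ths) = (1 <= j).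
  by rewrite subr_ge0 -{1}[ths]mul1r ler_pM2r // ler1z.
rewrite big_cons /heav fires.
have [j_ge1 | j_lt1] := lerP 1 j.
  rewrite mul1r -[X in _ - X]mul1r -mulrBl -[_ - 1](intrB R j 1) IH /clampz.
  have -> : Num.max 0 (Num.min j L.+1%:Z) =
            Num.max 0 (Num.min (j - 1) L%:Z) + 1 by lia.
  by rewrite intrD mulrDl mul1r addrC.
rewrite mul0r subr0 add0r IH /clampz.
by have -> : Num.max 0 (Num.min j L.+1%:Z) = Num.max 0 (Num.min j L%:Z) by lia.
Qed.

Lemma clip01_scale (th : R) (F : int) (L : nat) : (0 < L)%N ->
  th * clip01 (F%:~R / L%:R) = (clampz F L)%:~R * (th / L%:R).
Proof.
move=> L_gt0; have L_gt0' : 0 < L%:R :> R by rewrite ltr0n.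
suff -> : clip01 (F%:~R / L%:R) = (clampz F L)%:~R / L%:R :> R.
  by rewrite mulrCA.
rewrite /clip01 /clampz.
have [F_le0 | F_gt0] : F <= 0 \/ 0 < F by lia.
  have -> : Num.max 0 (Num.min F L%:Z) = 0 by lia.
  have u_le0 : F%:~R / L%:R <= 0 :> R by rewrite pmulr_lle0 ?invr_gt0 // lerz0.
  by rewrite (max_r u_le0) (min_l ler01) mul0r.
have [F_leL | F_gtL] : F <= L%:Z \/ L%:Z < F by lia.
  have -> : Num.max 0 (Num.min F L%:Z) = F by lia.
  have u_ge0 : 0 <= F%:~R / L%:R :> R by rewrite divr_ge0 ?ler0z ?ltW.
  have u_le1 : F%:~R / L%:R <= 1 :> R.
    by rewrite ler_pdivrMr // mul1r -[L%:R]/((L%:Z)%:~R) ler_int.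
  by rewrite (max_l u_ge0) (min_l u_le1).
have -> : Num.max 0 (Num.min F L%:Z) = L%:Z by lia.
have u_ge1 : 1 <= F%:~R / L%:R :> R.
  by rewrite ler_pdivlMr // mul1r -[L%:R]/((L%:Z)%:~R) ler_int ltW.
by rewrite (max_l (le_trans ler01 u_ge1)) (min_r u_ge1) mulfV ?gt_eqF.
Qed.

Lemma qcfs_clampz (L : nat) (th y : R) : (0 < L)%N ->
  qcfs L th y = (clampz (Num.floor (y * L%:R / th + 2^-1)) L)%:~R * (th / L%:R).
Proof. exact: clip01_scale. Qed.

Lemma sum_pasc_first (L : nat) (th x : R) : (0 < L)%N -> 0 < th ->
  \sum_(s <- pasc_first L th x) s = qcfs L th x.
Proof.
move=> L_gt0 th_gt0; rewrite /pasc_first !qcfs_clampz // sum_fire ?clampz_id //.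
by rewrite divr_gt0 ?ltr0n.
Qed.

Lemma stage1_invariant (ths : R) (xs : seq R) : 0 < ths ->
  let: (m, s) := foldl (stage1_step ths) (ths / 2%:R, 0) xs in
  exists2 j : int, s = j%:~R * ths &
    [/\ m + s = ths / 2%:R + \sum_(x <- xs) x, 0 <= j <= (size xs)%:Z,
        ths <= m -> 1 <= j & m < 0 -> j < (size xs)%:Z].
Proof.
move=> ths_gt0; elim/last_ind: xs => [|xs x IH].
  by exists 0; rewrite ?big_nil ?mul0r ?addr0 //; split=> // ?; exfalso; lra.
rewrite foldl_rcons size_rcons -cats1 big_cat big_seq1.
case: foldl IH => m s [j s_eq [sum_ms j_bounds _ _]] /=.
rewrite /stage1_step /=.
case: ifP => fired /=.
  exists (j + 1); first by rewrite s_eq intrD mulrDl mul1r.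
  split=> [|||m_neg]; [by rewrite [RHS]addrA -sum_ms; ring | lia | lia |].
  by exfalso; lra.
exists j => //.
split=> [||m_ge|_]; [by rewrite [RHS]addrA -sum_ms; ring | lia | | lia].
by rewrite m_ge in fired.
Qed.

Lemma stage2_invariant (ths m s : R) (j : int) k : 0 < ths -> s = j%:~R * ths ->
  let: (m', s') := iter k (stage2_step ths) (m, s) in
  exists2 j' : int, s' = j'%:~R * ths & m' + s' = m + s /\
    [\/ 0 <= m' < ths, ths <= m' /\ j' = j + k%:Z | m' < 0 /\ j' = j - k%:Z].
Proof.
move=> ths_gt0 s_eq; elim: k => [|k IH] /=.
  exists j => //; split=> //.
  have [m_ge | m_lt] := lerP ths m; first by constructor 2; split=> //; lia.
  have [m_ge0 | m_lt0] := lerP 0 m; first by constructor 1; apply/andP.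
  by constructor 3; split=> //; lia.
case: (iter k _ _) IH => m' s' [j' s'_eq [sum_ms m'_cases]] /=.
rewrite /stage2_step; case: ifP => [m'_ge | /negbT m'_lt].
  exists (j' + 1); first by rewrite s'_eq intrD mulrDl mul1r.
  split; first by rewrite -sum_ms; ring.
  case: m'_cases => [/andP[_ m'_lt] | [_ ->] | [m'_lt0 _]].
  - by rewrite ltNge m'_ge in m'_lt.
  - have [m'_ge2 | m'_lt2] := lerP ths (m' - ths).
      by constructor 2; split=> //; lia.
    by constructor 1; rewrite subr_ge0 m'_ge.
  - by exfalso; lra.
case: ifP => [m'_lt0 | /negbT m'_ge0].
  exists (j' - 1); first by rewrite s'_eq intrB mulrBl mul1r.
  split; first by rewrite -sum_ms; ring.
  case: m'_cases => [/andP[m'_ge0 _] | [m'_ge _] | [_ ->]].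
  - by rewrite ltNge m'_ge0 in m'_lt0.
  - by rewrite m'_ge in m'_lt.
  - have [m'_ge2 | m'_lt2] := lerP 0 (m' + ths).
      by constructor 1; rewrite /= gtrDr.
    by constructor 3; split=> //; lia.
exists j' => //; split=> //.
case: m'_cases => [? | [m'_ge _] | [m'_lt0 _]]; first by constructor 1.
- by rewrite m'_ge in m'_lt.
- by rewrite m'_lt0 in m'_ge0.
Qed.

Lemma clampz_floor (ths m u : R) (j : int) (L : nat) : 0 < ths ->
  m + j%:~R * ths = ths * u ->
  [\/ 0 <= m < ths, ths <= m /\ L%:Z <= j | m < 0 /\ j <= 0] ->
  clampz (Num.floor u) L = clampz j L.
Proof.
move=> ths_gt0 mu_eq m_cases.
have u_eq : u = m / ths + j%:~R.
  by rewrite -[u](mulKf (lt0r_neq0 ths_gt0)) -mu_eq; field; rewrite gt_eqF.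
have [m_lt | m_ge | m_lt0] := m_cases.
- congr clampz; apply: floor_def; case/andP: m_lt => m_ge0 m_lt.
  rewrite u_eq intrD (addrC (m / ths)) lerDl ltrD2l divr_ge0 ?(ltW ths_gt0) //=.
  by rewrite ltr_pdivrMr // mul1r.
- case: m_ge => m_ge j_ge.
  have : j + 1 <= Num.floor u.
    by rewrite floor_ge_int intrD u_eq addrC lerD2r ler_pdivlMr // mul1r.
  by rewrite /clampz; lia.
- case: m_lt0 => m_lt0 j_le0.
  have : Num.floor u < 0.
    rewrite floor_lt_int u_eq -[0%:~R](addr0 0) ltr_leD ?lerz0 //.
    by rewrite pmulr_llt0 ?invr_gt0.
  by rewrite /clampz; lia.
Qed.

Lemma sum_pasc_later (L : nat) (th : R) (xs : seq R) : (0 < L)%N -> 0 < th ->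
  \sum_(s <- pasc_later (size xs) L th xs) s = qcfs L th (\sum_(x <- xs) x).
Proof.
move=> L_gt0 th_gt0; rewrite /pasc_later qcfs_clampz //.
set ths := th / L%:R; set N := (maxn (size xs) L).-1.
have ths_gt0 : 0 < ths by rewrite divr_gt0 ?ltr0n.
have N_eq : N.+1 = maxn (size xs) L.
  by rewrite prednK // (leq_trans L_gt0) ?leq_maxr.
have := stage1_invariant xs ths_gt0.
case: foldl => m1 s1 [j1 s1_eq [sum1 j1_bounds m1_ge m1_lt0]].
have := stage2_invariant m1 N ths_gt0 s1_eq.
case: (iter N _ _) => m2 s2 [j2 -> [sum2 m2_cases]] /=.
rewrite sum_fire //; congr (_%:~R * _); symmetry.
apply: (clampz_floor (m := m2) ths_gt0).
  rewrite sum2 sum1 /ths; field; rewrite pnatr_eq0 -lt0n L_gt0 andbT gt_eqF //.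
have N_ths_ge0 : 0 <= N%:R * ths by rewrite mulr_ge0 ?ler0n ?ltW.
move: sum2; rewrite s1_eq -[N%:R]/((N%:Z)%:~R) in N_ths_ge0 *.
(* Otherwise stage 2 moved the count N >= max(size xs, L) - 1 times in one
   direction, which saturates the clamp. *)
case: m2_cases => [? | [m2_ge ->] | [m2_lt0 ->]]; first by constructor 1.
- rewrite intrD mulrDl => sum2; constructor 2; split => //.
  have : 1 <= j1 by apply: m1_ge; lra.
  lia.
- rewrite intrB mulrBl => sum2; constructor 3; split => //.
  have : j1 < (size xs)%:Z by apply: m1_lt0; lra.
  lia.
Qed.
Lemma size_lift_vec m L (f : 'I_m -> seq R) : size (lift_vec L f) = L.
Proof. exact: size_mkseq. Qed.

Lemma sum_lift_vec m L (f : 'I_m -> seq R) : (forall j, size (f j) = L) ->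
  \sum_(z <- lift_vec L f) z = \row_j \sum_(x <- f j) x.
Proof.
move=> size_f; apply/rowP => j; rewrite mxE /lift_vec /mkseq big_map summxE.
under eq_bigr do rewrite mxE.
by rewrite [RHS](big_nth 0) size_f /index_iota subn0.
Qed.

Lemma sum_pasc_first_vec m L th (X : 'rV[R]_m) : (0 < L)%N -> 0 < th ->
  \sum_(z <- pasc_first_vec L th X) z = qcfs_vec L th X.
Proof.
move=> L_gt0 th_gt0; rewrite sum_lift_vec => [|j]; last exact: size_fire.
by apply/rowP => j; rewrite !mxE sum_pasc_first.
Qed.

Lemma sum_pasc_later_vec m L th (X : seq 'rV[R]_m) : (0 < L)%N -> 0 < th ->
  \sum_(z <- pasc_later_vec (size X) L th X) z =
  qcfs_vec L th (\sum_(x <- X) x).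
Proof.
move=> L_gt0 th_gt0; rewrite sum_lift_vec => [|j]; last exact: size_fire.
apply/rowP => j; rewrite !mxE summxE -(size_map (fun x : 'rV_m => x 0 j)).
by rewrite sum_pasc_later // big_map.
Qed.

Lemma sum_mulr_addr (T : Type) (r : seq T) (a b : R) (F : T -> R) :
  \sum_(i <- r) (a * F i + b) = a * \sum_(i <- r) F i + (size r)%:R * b.
Proof.
elim: r => [|i r IH]; first by rewrite !big_nil mulr0 mul0r addr0.
by rewrite !big_cons IH /= -natr1; ring.
Qed.

Lemma sum_mm_step m n (M : matmul R m n) L (Z : seq 'rV[R]_m) :
  (0 < L)%N -> size Z = L ->
  \sum_(z <- Z) mm_step M L z = mm_apply M (\sum_(z <- Z) z).
Proof.
move=> L_gt0 size_Z; apply/rowP => j; rewrite summxE.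
set a := mm_gamma M 0 j / Num.sqrt (mm_sigma2 M 0 j + mm_eps M 0 j).
set c := a * (mm_b M 0 j - mm_mu M 0 j) + mm_beta M 0 j.
have step_affine (z : 'rV[R]_m) :
    mm_step M L z 0 j = a * (z *m mm_W M) 0 j + c / L%:R.
  by rewrite [LHS]mxE /c /a; ring.
have apply_affine (y : 'rV[R]_m) :
    mm_apply M y 0 j = a * (y *m mm_W M) 0 j + c.
  by rewrite [LHS]mxE /c /a; ring.
under eq_bigr do rewrite step_affine.
rewrite sum_mulr_addr apply_affine mulmx_suml summxE size_Z mulrCA.
by rewrite divff ?mulr1 // pnatr_eq0 -lt0n.
Qed.

Lemma classif_scale c (a : R) (v : 'rV[R]_c) k : a != 0 ->
  classif (a *: v) k = classif v k.
Proof.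
move=> a_neq0; rewrite /classif mxE.
under eq_bigr do rewrite mxE.
by rewrite -mulr_sumr invfM mulrACA mulfV // mul1r.
Qed.
Definition qstep c m (B : body R c m) : nat :=
  match B with BLast _ L _ _ | BCons _ _ L _ _ _ => L end.

Definition qthreshold c m (B : body R c m) : R :=
  match B with BLast _ _ th _ | BCons _ _ _ th _ _ => th end.

Definition pasc_after_qcfs c m (B : body R c m) : seq 'rV[R]_m -> 'rV[R]_c :=
  match B in body _ _ m0 return seq 'rV[R]_m0 -> 'rV[R]_c with
  | BLast _ L _ M => fun S => snn_output L (map (mm_step M L) S)
  | BCons _ _ L _ M B' => fun S => body_pasc L B' (map (mm_step M L) S)
  end.

Lemma body_pascE c m Lprev (B : body R c m) (X : seq 'rV[R]_m) :
  body_pasc Lprev B X =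
  pasc_after_qcfs B (pasc_later_vec Lprev (qstep B) (qthreshold B) X).
Proof. by case: m / B X. Qed.

Lemma pasc_evalE c d0 d1 (M1 : matmul R d0 d1) (B : body R c d1) z :
  pasc_eval (Net M1 B) z =
  pasc_after_qcfs B (pasc_first_vec (qstep B) (qthreshold B) (mm_apply M1 z)).
Proof. by case: d1 / B M1. Qed.

Lemma body_wf_head c m (B : body R c m) :
  body_wf B -> (0 < qstep B)%N /\ 0 < qthreshold B.
Proof. by case: B => [? ? ? ? [] | ? ? ? ? ? ? []]. Qed.

Lemma pasc_after_qcfs_scaled c m (B : body R c m) : body_wf B ->
  forall (X : 'rV[R]_m) (S : seq 'rV[R]_m), size S = qstep B ->
  \sum_(s <- S) s = qcfs_vec (qstep B) (qthreshold B) X ->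
  exists2 a : R, a != 0 & pasc_after_qcfs B S = a *: body_eval B X.
Proof.
elim: B => [m0 L th M | m0 k L th M B IH] /= wf X S size_S sum_S.
  case: wf => L_gt0 _; exists L%:R^-1.
    by rewrite invr_neq0 // pnatr_eq0 -lt0n.
  by rewrite /snn_output big_map sum_mm_step // sum_S.
case: wf => L_gt0 _ wfB; have [L'_gt0 th'_gt0] := body_wf_head wfB.
set S' := map (mm_step M L) S.
have size_S' : size S' = L by rewrite size_map.
rewrite body_pascE; apply: IH => //; first exact: size_lift_vec.
rewrite -[in pasc_later_vec L]size_S' sum_pasc_later_vec //.
by rewrite big_map sum_mm_step // sum_S.
Qed.
End PASC_sums.

Unset Implicit Arguments.

Theorem theorem4 (R : realType) (c d0 : nat) (N : net R c d0) :
  net_wf N ->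
  forall (z : 'rV[R]_d0) (k : 'I_c),
    classif (pasc_eval N z) k = classif (ann_eval N z) k.
Proof.
case: N => d1 M1 B wf z k; have [L_gt0 th_gt0] := body_wf_head wf.
rewrite pasc_evalE.
have [a a_neq0 ->] := pasc_after_qcfs_scaled wf (size_lift_vec _ _)
  (sum_pasc_first_vec (mm_apply M1 z) L_gt0 th_gt0).
by rewrite classif_scale.
Qed.
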